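(* For $\lambda\in[-1,1]$ let $C_\lambda(u_1,u_2,u_3)=u_1u_2u_3[1+\lambda(1-u_1)(1-u_2)(1-u_3)]$ on $[0,1]^3$. If $\lambda\in[-1,0]$, then $C_\lambda$ is $I(1,1,1)$, $I(1,-1,-1)$, $I(-1,1,-1)$ and $I(-1,-1,1)$. If $\lambda\in[0,1]$, then $C_\lambda$ is $I(-1,1,1)$, $I(1,-1,1)$, $I(1,1,-1)$ and $I(-1,-1,-1)$.
   Context: For $\alpha\in\{-1,1\}^n$ and a random vector $\mathbf X$, write $\alpha\mathbf X=(\alpha_1X_1,\dots,\alpha_nX_n)$; inequalities between vectors are componentwise. $\mathbf X$ is $I(\alpha)$ if for every $\mathbf x\in\mathbb R^n$, $\mathbb P[\alpha\mathbf X>\mathbf x\mid \alpha\mathbf X>\mathbf x']\le \mathbb P[\alpha\mathbf X>\mathbf x\mid \alpha\mathbf X>\mathbf x'']$ whenever $\mathbf x'\le\mathbf x''$ and $\mathbb P[\alpha\mathbf X>\mathbf x'']>0$. A copula is $I(\alpha)$ if a random vector with that distribution function is. *)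

From HB Require Import structures.
From mathcomp Require Import all_boot all_order all_algebra.
From mathcomp Require Import all_classical all_reals all_analysis.
Set Implicit Arguments. Unset Strict Implicit. Unset Printing Implicit Defensive.
Import Order.TTheory GRing.Theory Num.Theory.
Local Open Scope classical_set_scope.
Local Open Scope ring_scope.

Definition vec3 (R : realType) (a b c : R) : 'I_3 -> R :=
  fun i => nth 0 [:: a; b; c] (nat_of_ord i).

Definition C_lambda (R : realType) (lam : R) (u : 'I_3 -> R) : R :=
  u ord0 * u (inord 1) * u (inord 2) *
  (1 + lam * (1 - u ord0) * (1 - u (inord 1)) * (1 - u (inord 2))).

Definition clamp01 (R : realType) (t : R) : R := Num.min 1 (Num.max 0 t).

Definition copula_df (R : realType) (n : nat) (C : ('I_n -> R) -> R)
  (x : 'I_n -> R) : R := C (fun i => clamp01 (x i)).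

Definition random_vector d (T : measurableType d) (R : realType) (n : nat)
  (X : 'I_n -> T -> R) : Prop := forall i, measurable_fun setT (X i).

Definition has_df d (T : measurableType d) (R : realType) (P : probability T R)
  (n : nat) (X : 'I_n -> T -> R) (F : ('I_n -> R) -> R) : Prop :=
  forall x : 'I_n -> R, P [set t | forall i, X i t <= x i] = (F x)%:E.

Definition upper_event (T : Type) (R : realType) (n : nat)
  (alpha : 'I_n -> R) (X : 'I_n -> T -> R) (x : 'I_n -> R) : set T :=
  [set t | forall i, x i < alpha i * X i t].

Definition condP d (T : measurableType d) (R : realType) (P : probability T R)
  (A B : set T) : R := fine (P (A `&` B)) / fine (P B).

Definition is_I d (T : measurableType d) (R : realType) (P : probability T R)
  (n : nat) (alpha : 'I_n -> R) (X : 'I_n -> T -> R) : Prop :=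
  forall x x' x'' : 'I_n -> R,
    (forall i, x' i <= x'' i) ->
    (0 < P (upper_event alpha X x''))%E ->
    condP P (upper_event alpha X x) (upper_event alpha X x')
      <= condP P (upper_event alpha X x) (upper_event alpha X x'').

(* A copula C (on [0,1]^n) is I(alpha): a random vector with distribution
   function copula_df C is I(alpha).  (The law is determined by the
   distribution function, so we quantify over all such random vectors.) *)
Definition copula_is_I (R : realType) (n : nat) (C : ('I_n -> R) -> R)
  (alpha : 'I_n -> R) : Prop :=
  forall (d : measure_display) (T : measurableType d) (P : probability T R)
    (X : 'I_n -> T -> R),
    random_vector X -> has_df P X (copula_df C) -> is_I P alpha X.

(* For a sign vector alpha = (bsign b_i), the event {alpha X > x} has probability
   w1 w2 w3 (1 + mu (1 - w1)(1 - w2)(1 - w3)) with w_i the uniform tail of x_i and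
   mu = - lam alpha_1 alpha_2 alpha_3: the margins are uniform and the bivariate
   margins independent, so passing from {X_i <= a} to {alpha_i X_i > x_i} in one
   coordinate only flips the sign of the parameter.  Intersections of such events
   correspond to coordinatewise minima of w, so I(alpha) amounts to
   G(min(v, w')) G(w) <= G(min(v, w)) G(w') for w <= w', where G is the expression
   above.  For mu in [0, 1] this holds one coordinate at a time, because
   t |-> t (1 + mu (1 - t) B) is nondecreasing on [0, 1] and the ratio of two such
   maps with B <= B' is monotone; mu in [0, 1] is exactly the sign condition of the
   theorem. *)

From HB Require Import structures.
From mathcomp Require Import all_boot all_order all_algebra.
From mathcomp Require Import all_classical all_reals all_analysis.
From mathcomp Require Import ring lra.
Import Order.TTheory GRing.Theory Num.Theory.
Set Implicit Arguments. Unset Strict Implicit. Unset Printing Implicit Defensive.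
Local Open Scope classical_set_scope.
Local Open Scope ring_scope.

Section fgm3.
Variable R : realDomainType.
Implicit Types mu A B t u v w x y : R.

Definition fgm3 mu u1 u2 u3 : R :=
  u1 * u2 * u3 * (1 + mu * (1 - u1) * (1 - u2) * (1 - u3)).

Lemma fgm3_swap12 mu u1 u2 u3 : fgm3 mu u1 u2 u3 = fgm3 mu u2 u1 u3.
Proof. by rewrite /fgm3; ring. Qed.

Lemma fgm3_swap13 mu u1 u2 u3 : fgm3 mu u1 u2 u3 = fgm3 mu u3 u2 u1.
Proof. by rewrite /fgm3; ring. Qed.

Definition fgm_slice mu B t : R := t * (1 + mu * (1 - t) * B).

Lemma fgm3_slice mu t u2 u3 :
  fgm3 mu t u2 u3 = u2 * u3 * fgm_slice mu ((1 - u2) * (1 - u3)) t.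
Proof. by rewrite /fgm3 /fgm_slice; ring. Qed.

Lemma fgm_slice_ge0 mu B t :
  0 <= mu -> 0 <= B -> 0 <= t <= 1 -> 0 <= fgm_slice mu B t.
Proof.
move=> mu0 B0 /andP[t0 t1]; apply: mulr_ge0 => //.
have : 0 <= mu * (1 - t) * B by rewrite !mulr_ge0 // subr_ge0.
lra.
Qed.

Lemma le_fgm_slice mu B x y :
  0 <= mu <= 1 -> 0 <= B <= 1 -> 0 <= x -> x <= y -> y <= 1 ->
  fgm_slice mu B x <= fgm_slice mu B y.
Proof.
move=> /andP[mu0 mu1] /andP[B0 B1] x0 xy y1.
have k0 : 0 <= mu * B by rewrite mulr_ge0.
have k1 : mu * B <= 1 by rewrite -[1]mulr1 ler_pM.
rewrite -subr_ge0.
have -> : fgm_slice mu B y - fgm_slice mu B x = (y - x) * (1 + mu * B * (1 - x - y)).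
  by rewrite /fgm_slice; ring.
by apply: mulr_ge0; nra.
Qed.

Lemma fgm_slice_cross mu A B x y :
  0 <= mu -> A <= B -> 0 <= x -> x <= y ->
  fgm_slice mu B y * fgm_slice mu A x <= fgm_slice mu B x * fgm_slice mu A y.
Proof.
move=> mu0 AB x0 xy; rewrite -subr_ge0.
have -> : fgm_slice mu B x * fgm_slice mu A y - fgm_slice mu B y * fgm_slice mu A x
  = x * y * mu * ((y - x) * (B - A)) by rewrite /fgm_slice; ring.
by rewrite !mulr_ge0 // ?subr_ge0 // (le_trans x0).
Qed.

Lemma cross_le_trans (Xw Xp Xq Yw Yp Yq : R) :
  0 < Yp -> 0 <= Yw -> 0 <= Yq ->
  Xp * Yw <= Xw * Yp -> Xq * Yp <= Xp * Yq -> Xq * Yw <= Xw * Yq.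
Proof.
move=> Yp0 Yw0 Yq0 h1 h2; rewrite -(ler_pM2l Yp0).
have := ler_wpM2l Yq0 h1; have := ler_wpM2l Yw0 h2; nra.
Qed.

Lemma cross_le_min (f g : R -> R) v x y :
  (forall t, 0 <= t <= 1 -> 0 <= f t) ->
  (forall a b, 0 <= a -> a <= b -> b <= 1 -> g a <= g b) ->
  (forall a b, 0 <= a -> a <= b -> b <= 1 -> f b * g a <= f a * g b) ->
  0 <= v -> 0 <= x -> x <= y -> y <= 1 ->
  f (Num.min v y) * g x <= f (Num.min v x) * g y.
Proof.
move=> f0 g_mono fg_cross v0 x0 xy y1.
have [vx|xv] := leP v x.
  rewrite min_l ?(le_trans vx) //.
  by apply: ler_wpM2l; [apply: f0; lra | apply: g_mono].
have [vy|yv] := leP v y; last exact: fg_cross.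
apply: le_trans (fg_cross x v x0 (ltW xv) (le_trans vy y1)) _.
by apply: ler_wpM2l; [apply: f0; lra | apply: g_mono; lra].
Qed.

Lemma fgm3_ge0 mu u1 u2 u3 :
  0 <= mu -> 0 <= u1 <= 1 -> 0 <= u2 <= 1 -> 0 <= u3 <= 1 -> 0 <= fgm3 mu u1 u2 u3.
Proof.
move=> mu0 hu1 /andP[u20 u21] /andP[u30 u31].
rewrite fgm3_slice; apply: mulr_ge0; first exact: mulr_ge0.
by apply: fgm_slice_ge0 => //; rewrite mulr_ge0 // subr_ge0.
Qed.

Lemma le_fgm3 mu x y u2 u3 :
  0 <= mu <= 1 -> 0 <= x -> x <= y -> y <= 1 -> 0 <= u2 <= 1 -> 0 <= u3 <= 1 ->
  fgm3 mu x u2 u3 <= fgm3 mu y u2 u3.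
Proof.
move=> hmu x0 xy y1 /andP[u20 u21] /andP[u30 u31].
rewrite !fgm3_slice ler_wpM2l ?mulr_ge0 // le_fgm_slice //.
by rewrite mulr_ge0 ?subr_ge0 //= -[1]mulr1 ler_pM ?subr_ge0 //; lra.
Qed.

Lemma fgm3_cross_le1 mu v w w' u2 u3 u2' u3' :
  0 <= mu <= 1 -> 0 <= v -> 0 <= w -> w <= w' -> w' <= 1 ->
  0 <= u2 -> u2 <= u2' -> u2' <= 1 -> 0 <= u3 -> u3 <= u3' -> u3' <= 1 ->
  fgm3 mu (Num.min v w') u2 u3 * fgm3 mu w u2' u3' <=
  fgm3 mu (Num.min v w) u2 u3 * fgm3 mu w' u2' u3'.
Proof.
move=> hmu v0 w0 ww' w'1 u20 u22 u2'1 u30 u33 u3'1.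
have [mu0 mu1] := andP hmu.
rewrite !fgm3_slice mulrACA [X in _ <= X]mulrACA.
apply: ler_wpM2l; first by rewrite !mulr_ge0 //; lra.
apply: cross_le_min => // [t ht|a b a0 ab b1|a b a0 ab b1].
- by apply: fgm_slice_ge0 => //; apply: mulr_ge0; lra.
- by apply: le_fgm_slice => //; rewrite mulr_ge0 ?subr_ge0 //= -[1]mulr1 ler_pM; lra.
- by apply: fgm_slice_cross => //; apply: ler_pM; lra.
Qed.

Lemma fgm3_cross_le mu v1 v2 v3 w1 w2 w3 w1' w2' w3' :
  0 <= mu <= 1 -> 0 <= v1 -> 0 <= v2 -> 0 <= v3 ->
  0 <= w1 -> 0 <= w2 -> 0 <= w3 -> w1 <= w1' -> w2 <= w2' -> w3 <= w3' ->
  w1' <= 1 -> w2' <= 1 -> w3' <= 1 -> 0 < fgm3 mu w1 w2 w3 ->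
  fgm3 mu (Num.min v1 w1') (Num.min v2 w2') (Num.min v3 w3') * fgm3 mu w1 w2 w3 <=
  fgm3 mu (Num.min v1 w1) (Num.min v2 w2) (Num.min v3 w3) * fgm3 mu w1' w2' w3'.
Proof.
move=> hmu v10 v20 v30 w10 w20 w30 l1 l2 l3 w1'1 w2'1 w3'1 pos.
have min_ge0 v w : 0 <= v -> 0 <= w -> 0 <= Num.min v w.
  by move=> v0 w0; rewrite le_min v0.
have min_le_r v w : Num.min v w <= w by rewrite ge_min lexx orbT.
have hw2 : 0 <= w2 <= 1 by rewrite w20 (le_trans l2).
have hw3 : 0 <= w3 <= 1 by rewrite w30 (le_trans l3).
have hw1' : 0 <= w1' <= 1 by rewrite w1'1 (le_trans w10).
have hw2' : 0 <= w2' <= 1 by rewrite w2'1 (le_trans w20).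
have hw3' : 0 <= w3' <= 1 by rewrite w3'1 (le_trans w30).
(* Chain one-coordinate steps through (w1', w2, w3) and (w1', w2', w3). *)
have pos_p : 0 < fgm3 mu w1' w2 w3 by apply: lt_le_trans pos _; apply: le_fgm3.
have pos_q : 0 < fgm3 mu w1' w2' w3.
  apply: lt_le_trans pos_p _; rewrite (fgm3_swap12 mu w1') (fgm3_swap12 mu w1' w2').
  exact: le_fgm3.
apply: (cross_le_trans (Xp := fgm3 mu (Num.min v1 w1') (Num.min v2 w2) (Num.min v3 w3))
  pos_p (ltW pos)).
- by apply: fgm3_ge0 => //; case/andP: hmu.
- apply: fgm3_cross_le1 => //; first exact: min_ge0.
  + exact: le_trans l2 _.
  + exact: min_ge0.
  + exact: le_trans l3 _.
apply: (cross_le_trans (Xp := fgm3 mu (Num.min v1 w1') (Num.min v2 w2') (Num.min v3 w3))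
  pos_q (ltW pos_p)).
- by apply: fgm3_ge0 => //; case/andP: hmu.
- rewrite 2!(fgm3_swap12 mu (Num.min v1 w1')) 2!(fgm3_swap12 mu w1').
  apply: fgm3_cross_le1 => //; first exact: min_ge0 (le_trans w10 l1).
  + exact: min_ge0.
  + exact: le_trans l3 _.
- rewrite 2!(fgm3_swap13 mu (Num.min v1 w1')) 2!(fgm3_swap13 mu w1').
  apply: fgm3_cross_le1 => //; first exact: min_ge0 (le_trans w20 l2).
  exact: min_ge0 (le_trans w10 l1).
Qed.

End fgm3.

Section clamp01.
Variable R : realType.
Implicit Types (a t x : R) (b : bool).

Lemma clamp01_cases t :
  [\/ t < 0 /\ clamp01 t = 0, 0 <= t <= 1 /\ clamp01 t = t | 1 < t /\ clamp01 t = 1].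
Proof.
rewrite /clamp01; have [t0|t0] := leP 0 t; last by apply: Or31; rewrite min_r.
by have [t1|t1] := leP t 1; [apply: Or32 | apply: Or33].
Qed.

Lemma clamp01_in01 t : 0 <= clamp01 t <= 1.
Proof. by case: (clamp01_cases t) => -[? ->]; lra. Qed.

Lemma clamp01_1 : clamp01 (1 : R) = 1.
Proof. by case: (clamp01_cases 1) => -[? ->]; lra. Qed.

Lemma le_clamp01 (a a' : R) : a <= a' -> clamp01 a <= clamp01 a'.
Proof. by move=> aa'; case: (clamp01_cases a) (clamp01_cases a') => -[? ->] [] [? ->]; lra. Qed.

Lemma clamp01_subr_le (a a' : R) : a <= a' -> clamp01 a' - clamp01 a <= a' - a.
Proof. by move=> aa'; case: (clamp01_cases a) (clamp01_cases a') => -[? ->] [] [? ->]; lra. Qed.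

Definition bsign b : R := if b then 1 else -1.

(* When [g] is the distribution function of [Z] restricted to an event [S],
   with [Z <= 1] almost surely and [g] continuous, [signed_tail b g x] is the
   probability of [S] and [x < bsign b * Z]. *)
Definition signed_tail b (g : R -> R) x : R :=
  if b then g 1 - g x else g (- x).

Definition uniform_tail b x : R := signed_tail b (@clamp01 R) x.

Lemma uniform_tail_in01 b x : 0 <= uniform_tail b x <= 1.
Proof.
by case: b => /=; rewrite ?clamp01_1; have := clamp01_in01 x; have := clamp01_in01 (- x); lra.
Qed.

Lemma uniform_tail_anti b (x x' : R) : x <= x' -> uniform_tail b x' <= uniform_tail b x.
Proof.
by case: b => xx' /=; [rewrite lerD2l lerN2 | rewrite -lerN2 in xx']; apply: le_clamp01.
Qed.

Lemma uniform_tail_max b (x x' : R) :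
  uniform_tail b (Num.max x x') = Num.min (uniform_tail b x) (uniform_tail b x').
Proof.
have [xx'|x'x] := leP x x'; first by rewrite min_r // uniform_tail_anti.
by rewrite min_l // uniform_tail_anti // ltW.
Qed.

Lemma fgm3_signed_tail (mu u2 u3 : R) b x :
  signed_tail b (fun a => fgm3 mu (clamp01 a) u2 u3) x =
  fgm3 (- bsign b * mu) (uniform_tail b x) u2 u3.
Proof. by case: b; rewrite /uniform_tail /= ?clamp01_1 /fgm3; ring. Qed.

End clamp01.

Arguments bsign {R} b.

Section prob.
Context d (T : measurableType d) (R : realType) (P : probability T R).
Implicit Types (A B S : set T) (Z : T -> R).

Definition prob A : R := fine (P A).

Lemma prob_ge0 A : 0 <= prob A.
Proof. by rewrite /prob fine_ge0. Qed.

Lemma le_prob A B : measurable A -> measurable B -> A `<=` B -> prob A <= prob B.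
Proof. by move=> mA mB AB; rewrite /prob fine_le ?fin_num_measure ?le_measure ?inE. Qed.

Lemma prob_setT : prob setT = 1.
Proof. by rewrite /prob probability_setT. Qed.

Lemma prob_le1 A : measurable A -> prob A <= 1.
Proof. by move=> mA; rewrite -prob_setT le_prob. Qed.

Lemma prob_setDI A B : measurable A -> measurable B ->
  prob A = prob (A `\` B) + prob (A `&` B).
Proof.
move=> mA mB; rewrite /prob (measureDI P mA mB) fineD // fin_num_measure //.
- exact: measurableD.
- exact: measurableI.
Qed.

Lemma prob_setI_eq1 A B : measurable A -> measurable B -> prob B = 1 ->
  prob (A `&` B) = prob A.
Proof.
move=> mA mB PB1; rewrite [RHS](prob_setDI mA mB).
suff -> : prob (A `\` B) = 0 by rewrite add0r.
apply/eqP; rewrite eq_le prob_ge0 andbT.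
have := prob_setDI measurableT mB; rewrite prob_setT setTI PB1 => PCB.
have -> : 0 = prob (setT `\` B) by lra.
by apply: le_prob; [exact: measurableD | exact: measurableD | move=> t []].
Qed.

Lemma measurable_le_cst Z a : measurable_fun setT Z -> measurable [set t | Z t <= a].
Proof.
by move=> mZ; rewrite -[X in measurable X]setTI; apply: measurable_fun_le.
Qed.

Lemma measurable_gt_cst Z a : measurable_fun setT Z -> measurable [set t | a < Z t].
Proof.
move=> mZ; rewrite (_ : [set t | a < Z t] = ~` [set t | Z t <= a]).
  exact/measurableC/measurable_le_cst.
by apply/seteqP; split => t /=; rewrite ltNge => /negP.
Qed.

Lemma measurable_lt_cst Z a : measurable_fun setT Z -> measurable [set t | Z t < a].
Proof.
move=> mZ; rewrite (_ : [set t | Z t < a] = ~` [set t | a <= Z t]).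
  by apply/measurableC; rewrite -[X in measurable X]setTI; apply: measurable_fun_le.
by apply/seteqP; split => t /=; rewrite ltNge => /negP.
Qed.

End prob.

Definition signed_event (T : Type) (R : realType) (b : bool) (Z : T -> R) (x : R) : set T :=
  [set t | x < bsign b * Z t].

Section uniform_component.
Context d (T : measurableType d) (R : realType) (P : probability T R).
Variables (Z : T -> R) (mZ : measurable_fun setT Z).
Hypothesis Z_uniform : forall a, prob P [set t | Z t <= a] = clamp01 a.
Implicit Types (S : set T) (x : R).

Lemma measurable_signed_event b x : measurable (signed_event b Z x).
Proof.
case: b; rewrite /signed_event /=.
- by under eq_set do rewrite mul1r; exact: measurable_gt_cst.
- by under eq_set do rewrite mulN1r ltrNr; exact: measurable_lt_cst.
Qed.

Lemma prob_gt_setI S x : measurable S ->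
  prob P ([set t | x < Z t] `&` S) = prob P S - prob P ([set t | Z t <= x] `&` S).
Proof.
move=> mS; rewrite (prob_setDI P mS (measurable_le_cst x mZ)) (setIC S) addrK.
congr (prob P _); apply/seteqP; split => t /= [? ?]; split => //.
- by apply/negP; rewrite -ltNge.
- by rewrite ltNge; apply/negP.
Qed.

Lemma prob_lt_setI S x : measurable S ->
  prob P ([set t | Z t < x] `&` S) = prob P ([set t | Z t <= x] `&` S).
Proof.
move=> mS; have mA : measurable ([set t | Z t <= x] `&` S).
  exact/measurableI/mS/measurable_le_cst.
rewrite (prob_setDI P mA (measurable_lt_cst x mZ)).
have -> : [set t | Z t <= x] `&` S `&` [set t | Z t < x] = [set t | Z t < x] `&` S.
  apply/seteqP; split => t /=; first by move=> [[_ ?] ?].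
  by move=> [lt_x ?]; split => //; split => //; apply: ltW.
suff -> : prob P ([set t | Z t <= x] `&` S `\` [set t | Z t < x]) = 0 by rewrite add0r.
apply/eqP; rewrite eq_le prob_ge0 andbT; apply/ler_addgt0Pr => e e0; rewrite add0r.
have le_atom : prob P ([set t | Z t <= x] `&` S `\` [set t | Z t < x]) <=
    prob P ([set t | Z t <= x] `\` [set t | Z t <= x - e]).
  apply: le_prob.
  - exact/measurableD/(measurable_lt_cst x mZ).
  - exact/measurableD/(measurable_le_cst (x - e) mZ)/(measurable_le_cst x mZ).
  move=> t [[le_x _] not_lt_x]; split => // le_xe; apply: not_lt_x => /=.
  by apply: le_lt_trans le_xe _; lra.
apply: le_trans le_atom _.
have := prob_setDI P (measurable_le_cst x mZ) (measurable_le_cst (x - e) mZ).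
have -> : [set t | Z t <= x] `&` [set t | Z t <= x - e] = [set t | Z t <= x - e].
  apply/seteqP; split => t /=; first by move=> [].
  by move=> le_xe; split => //; apply: le_trans le_xe _; lra.
rewrite !Z_uniform; have := @clamp01_subr_le R (x - e) x; lra.
Qed.

Lemma prob_signed_event b x S : measurable S ->
  prob P (signed_event b Z x `&` S) =
  signed_tail b (fun a => prob P ([set t | Z t <= a] `&` S)) x.
Proof.
move=> mS; case: b; rewrite /signed_event /=.
- under eq_set do rewrite mul1r.
  have mZ1 := measurable_le_cst 1 mZ.
  by rewrite prob_gt_setI // -(prob_setI_eq1 mS mZ1) ?Z_uniform ?clamp01_1 // setIC.
- by under eq_set do rewrite mulN1r ltrNr; rewrite prob_lt_setI.
Qed.

Lemma prob_signed_event_fgm3 b x S mu u2 u3 : measurable S ->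
  (forall a, prob P ([set t | Z t <= a] `&` S) = fgm3 mu (clamp01 a) u2 u3) ->
  prob P (signed_event b Z x `&` S) = fgm3 (- bsign b * mu) (uniform_tail b x) u2 u3.
Proof.
move=> mS hS; rewrite prob_signed_event // -fgm3_signed_tail.
by congr signed_tail; apply: funext => a.
Qed.

End uniform_component.

Lemma prob_uniform_of_setI d (T : measurableType d) (R : realType) (P : probability T R)
    (Z : T -> R) (S : set T) :
  measurable_fun setT Z -> measurable S ->
  (forall a, prob P ([set t | Z t <= a] `&` S) = clamp01 a) ->
  forall a, prob P [set t | Z t <= a] = clamp01 a.
Proof.
move=> mZ mS hZS a; rewrite -hZS prob_setI_eq1 //; first exact: measurable_le_cst.
apply/eqP; rewrite eq_le prob_le1 //=; rewrite -(@clamp01_1 R) -(hZS 1).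
by apply: le_prob => //; exact/measurableI/mS/measurable_le_cst.
Qed.

Section fgm3_law.
Context d (T : measurableType d) (R : realType) (P : probability T R).
Variables (lam : R) (Y1 Y2 Y3 : T -> R).
Hypotheses (mY1 : measurable_fun setT Y1) (mY2 : measurable_fun setT Y2)
  (mY3 : measurable_fun setT Y3).
Hypothesis Y_fgm3 : forall a1 a2 a3,
  prob P ([set t | Y1 t <= a1] `&` ([set t | Y2 t <= a2] `&` [set t | Y3 t <= a3])) =
  fgm3 lam (clamp01 a1) (clamp01 a2) (clamp01 a3).

Let mle1 a := measurable_le_cst a mY1.
Let mle2 a := measurable_le_cst a mY2.
Let mle3 a := measurable_le_cst a mY3.

Lemma fgm3_law_uniform1 a : prob P [set t | Y1 t <= a] = clamp01 a.
Proof.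
apply: (prob_uniform_of_setI mY1 (measurableI _ _ (mle2 1) (mle3 1))) => {}a.
by rewrite Y_fgm3 clamp01_1 /fgm3; ring.
Qed.

Lemma fgm3_law_uniform2 a : prob P [set t | Y2 t <= a] = clamp01 a.
Proof.
apply: (prob_uniform_of_setI mY2 (measurableI _ _ (mle1 1) (mle3 1))) => {}a.
by rewrite setICA Y_fgm3 clamp01_1 /fgm3; ring.
Qed.

Lemma fgm3_law_uniform3 a : prob P [set t | Y3 t <= a] = clamp01 a.
Proof.
apply: (prob_uniform_of_setI mY3 (measurableI _ _ (mle1 1) (mle2 1))) => {}a.
by rewrite setICA [[set t | Y3 t <= a] `&` _]setIC Y_fgm3 clamp01_1 /fgm3; ring.
Qed.

Lemma prob_signed_events_fgm3 b1 b2 b3 x1 x2 x3 :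
  prob P (signed_event b1 Y1 x1 `&` (signed_event b2 Y2 x2 `&` signed_event b3 Y3 x3)) =
  fgm3 (- bsign b1 * (- bsign b2 * (- bsign b3 * lam)))
    (uniform_tail b1 x1) (uniform_tail b2 x2) (uniform_tail b3 x3).
Proof.
have mE1 := measurable_signed_event mY1 b1 x1.
have mE2 := measurable_signed_event mY2 b2 x2.
have mE3 := measurable_signed_event mY3 b3 x3.
have step3 a1 a2 :
    prob P ([set t | Y1 t <= a1] `&` ([set t | Y2 t <= a2] `&` signed_event b3 Y3 x3)) =
    fgm3 (- bsign b3 * lam) (clamp01 a1) (clamp01 a2) (uniform_tail b3 x3).
  rewrite [_ `&` signed_event _ _ _]setIC setICA fgm3_swap13.
  apply: (prob_signed_event_fgm3 mY3 fgm3_law_uniform3) => [|a]; first exact: measurableI.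
  by rewrite setICA [[set t | Y3 t <= a] `&` _]setIC Y_fgm3 fgm3_swap13.
have step2 a1 :
    prob P ([set t | Y1 t <= a1] `&` (signed_event b2 Y2 x2 `&` signed_event b3 Y3 x3)) =
    fgm3 (- bsign b2 * (- bsign b3 * lam)) (clamp01 a1) (uniform_tail b2 x2)
      (uniform_tail b3 x3).
  rewrite setICA fgm3_swap12.
  apply: (prob_signed_event_fgm3 mY2 fgm3_law_uniform2) => [|a]; first exact: measurableI.
  by rewrite setICA step3 fgm3_swap12.
by apply: (prob_signed_event_fgm3 mY1 fgm3_law_uniform1) => //; exact: measurableI.
Qed.

End fgm3_law.

Lemma forall_ord3 (Q : 'I_3 -> Prop) :
  (forall i, Q i) <-> [/\ Q ord0, Q (inord 1) & Q (inord 2)].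
Proof.
split=> [Q_all|[Q0 Q1 Q2] [[|[|[|k]]] lt_k3]] //.
- by have -> : Ordinal lt_k3 = ord0 by exact: val_inj.
- by have -> : Ordinal lt_k3 = inord 1 by apply: val_inj; rewrite /= inordK.
- by have -> : Ordinal lt_k3 = inord 2 by apply: val_inj; rewrite /= inordK.
Qed.

Lemma vec3_1 (R : realType) (a b c : R) : vec3 a b c (inord 1) = b.
Proof. by rewrite /vec3 inordK. Qed.

Lemma vec3_2 (R : realType) (a b c : R) : vec3 a b c (inord 2) = c.
Proof. by rewrite /vec3 inordK. Qed.

Lemma upper_eventI (T : Type) (R : realType) n (alpha : 'I_n -> R) (X : 'I_n -> T -> R)
    (x x' : 'I_n -> R) :
  upper_event alpha X x `&` upper_event alpha X x' =
  upper_event alpha X (fun i => Num.max (x i) (x' i)).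
Proof.
apply/seteqP; split => t /=; first by move=> [lt_x lt_x'] i; rewrite gt_max lt_x lt_x'.
by move=> lt_max; split=> i; have := lt_max i; rewrite /= gt_max => /andP[].
Qed.

Lemma upper_event_vec3 (T : Type) (R : realType) (b1 b2 b3 : bool) (X : 'I_3 -> T -> R)
    (x : 'I_3 -> R) :
  upper_event (vec3 (bsign b1) (bsign b2) (bsign b3)) X x =
  signed_event b1 (X ord0) (x ord0) `&`
    (signed_event b2 (X (inord 1)) (x (inord 1)) `&`
     signed_event b3 (X (inord 2)) (x (inord 2))).
Proof.
apply/seteqP; split => t /=.
- by move/(forall_ord3 (fun i => _ < _ * _)) => [] /=; rewrite vec3_1 vec3_2.
- by move=> [h1 [h2 h3]]; apply/forall_ord3; rewrite /= vec3_1 vec3_2.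
Qed.

Lemma lower_set_vec3 (T : Type) (R : realType) (X : 'I_3 -> T -> R) (a1 a2 a3 : R) :
  [set t | forall i, X i t <= vec3 a1 a2 a3 i] =
  [set t | X ord0 t <= a1] `&` ([set t | X (inord 1) t <= a2] `&` [set t | X (inord 2) t <= a3]).
Proof.
apply/seteqP; split => t /=.
- by move/(forall_ord3 (fun i => _ <= _)) => [] /=; rewrite vec3_1 vec3_2.
- by move=> [h1 [h2 h3]]; apply/forall_ord3; rewrite /= vec3_1 vec3_2.
Qed.

Lemma condPE d (T : measurableType d) (R : realType) (P : probability T R) (A B : set T) :
  condP P A B = prob P (A `&` B) / prob P B.
Proof. by []. Qed.

Lemma copula_is_I_fgm3 (R : realType) (lam : R) (b1 b2 b3 : bool) :
  0 <= - bsign b1 * (- bsign b2 * (- bsign b3 * lam)) <= 1 ->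
  copula_is_I (C_lambda lam) (vec3 (bsign b1) (bsign b2) (bsign b3)).
Proof.
move=> mu01 d T P X mX X_df x x' x'' le_x' P_pos.
set alpha := vec3 _ _ _.
have Y_fgm3 a1 a2 a3 : prob P ([set t | X ord0 t <= a1] `&`
    ([set t | X (inord 1) t <= a2] `&` [set t | X (inord 2) t <= a3])) =
    fgm3 lam (clamp01 a1) (clamp01 a2) (clamp01 a3).
  by rewrite /prob -lower_set_vec3 X_df /copula_df /C_lambda /= vec3_1 vec3_2.
have mU z : measurable (upper_event alpha X z).
  by rewrite upper_event_vec3; do 2?apply: measurableI; apply: measurable_signed_event.
have prob_U z : prob P (upper_event alpha X z) =
    fgm3 (- bsign b1 * (- bsign b2 * (- bsign b3 * lam)))
      (uniform_tail b1 (z ord0)) (uniform_tail b2 (z (inord 1)))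
      (uniform_tail b3 (z (inord 2))).
  by rewrite upper_event_vec3; apply: prob_signed_events_fgm3.
have pos'' : 0 < prob P (upper_event alpha X x'').
  by rewrite fine_gt0 // P_pos (le_lt_trans (probability_le1 P (mU x''))) ?ltry.
have pos' : 0 < prob P (upper_event alpha X x').
  apply: lt_le_trans pos'' _; apply: le_prob => // t /= lt_x'' i.
  exact: le_lt_trans (le_x' i) (lt_x'' i).
rewrite !condPE !upper_eventI ler_pdivrMr // mulrAC ler_pdivlMr //.
move: pos''; rewrite !prob_U !uniform_tail_max => pos''.
have tail_ge0 b z : 0 <= uniform_tail b z by case/andP: (uniform_tail_in01 b z).
have tail_le1 b z : uniform_tail b z <= 1 by case/andP: (uniform_tail_in01 b z).
by apply: fgm3_cross_le; rewrite ?tail_ge0 ?tail_le1 ?uniform_tail_anti.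
Qed.

Theorem mainTheorem7 (R : realType) (lam : R) :
  (-1 <= lam <= 0 ->
     copula_is_I (C_lambda lam) (vec3 1 1 1) /\
     copula_is_I (C_lambda lam) (vec3 1 (-1) (-1)) /\
     copula_is_I (C_lambda lam) (vec3 (-1) 1 (-1)) /\
     copula_is_I (C_lambda lam) (vec3 (-1) (-1) 1)) /\
  (0 <= lam <= 1 ->
     copula_is_I (C_lambda lam) (vec3 (-1) 1 1) /\
     copula_is_I (C_lambda lam) (vec3 1 (-1) 1) /\
     copula_is_I (C_lambda lam) (vec3 1 1 (-1)) /\
     copula_is_I (C_lambda lam) (vec3 (-1) (-1) (-1))).
Proof.
have I_signs b1 b2 b3 := @copula_is_I_fgm3 R lam b1 b2 b3.
split=> /andP[lam_lb lam_ub].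
- split; [|split; [|split]].
  + by apply: (I_signs true true true); rewrite /bsign; lra.
  + by apply: (I_signs true false false); rewrite /bsign; lra.
  + by apply: (I_signs false true false); rewrite /bsign; lra.
  + by apply: (I_signs false false true); rewrite /bsign; lra.
- split; [|split; [|split]].
  + by apply: (I_signs false true true); rewrite /bsign; lra.
  + by apply: (I_signs true false true); rewrite /bsign; lra.
  + by apply: (I_signs true true false); rewrite /bsign; lra.
  + by apply: (I_signs false false false); rewrite /bsign; lra.
Qed.
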